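(* For $|q|<1$ and $m\in\mathbb Z$ define $$f_m(q)=\sum_{n,k\ge0}(-1)^kq^{n(n+1)+k(k+1)/2-nk+mn}\frac{(q;q)_{n+k}}{(q;q)_n^3(q;q)_k}.$$ Then $$f_{-1}(q)=(q;q)_\infty\sum_{n\ge0}\frac{q^{n(n+1)}}{(q;q)_n^3},\qquad f_{-2}(q)=(q;q)_\infty\sum_{n\ge0}(2-q^n)\frac{q^{n(n+1)}}{(q;q)_n^3},$$ $$f_{-3}(q)=(q;q)_\infty\sum_{n\ge0}\Big((3+q^{-1})-(2+2q^{-1})q^n+q^{2n-1}\Big)\frac{q^{n(n+1)}}{(q;q)_n^3}.$$
   Context: $(a;q)_n=\prod_{j=0}^{n-1}(1-aq^j)$ and $(q;q)_\infty=\prod_{j\ge1}(1-q^j)$, for $|q|<1$. The double series converges absolutely since $n^2-nk+k^2/2$ is a positive definite quadratic form. *)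

From Stdlib Require Import Reals ZArith.
From Coquelicot Require Import Coquelicot.
Open Scope C_scope.

Fixpoint cpow (x : C) (n : nat) : C :=
  match n with O => 1 | S n' => x * cpow x n' end.

(* integer power x^z in C (x^(-n) = 1/x^n, meaningful for x <> 0) *)
Definition cpowZ (x : C) (z : Z) : C :=
  match z with
  | Z0 => 1
  | Zpos p => cpow x (Pos.to_nat p)
  | Zneg p => / cpow x (Pos.to_nat p)
  end.

Fixpoint qpoch (a q : C) (n : nat) : C :=
  match n with O => 1 | S n' => qpoch a q n' * (1 - a * cpow q n') end.

Definition is_qpoch_inf (q P : C) : Prop :=
  filterlim (fun N => qpoch q q N) eventually (locally P).

(* exponent n(n+1) + k(k+1)/2 - nk + mn  (k(k+1) is even, so exact) *)
Definition fexp (m : Z) (n k : nat) : Z :=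
  let n' := Z.of_nat n in let k' := Z.of_nat k in
  n' * (n' + 1) + (k' * (k' + 1)) / 2 - n' * k' + m * n'.

Definition fterm (m : Z) (q : C) (n k : nat) : C :=
  cpow (-1) k * cpowZ q (fexp m n k)
  * (qpoch q q (n + k) / (cpow (qpoch q q n) 3 * qpoch q q k)).

(* f_m(q) = F : the double series (summed as the iterated series over n of
   the series over k; it converges absolutely) has sum F *)
Definition is_f (m : Z) (q F : C) : Prop :=
  exists g : nat -> C,
    (forall n, is_series (fun k => fterm m q n k) (g n)) /\ is_series g F.

Definition bterm (q : C) (n : nat) : C :=
  cpow q (n * (n + 1)) / cpow (qpoch q q n) 3.

(* Expanding (q;q)_(n+k) = (q;q)_n (q^(n+1);q)_k by the q-binomial theorem splits the
   k-sum of f_m into a double sum over j + l = k whose l-series is Euler's expansion of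
   (q^(j-n+1);q)_oo = (q;q)_oo / (q;q)_(j-n), which vanishes for j < n.  Every summand is
   dominated by a product of geometric sequences, so the order of summation is free, and
   f_m = (q;q)_oo sum_j q^(j(j+1)) B_(m+1)(j) / (q;q)_j with the finite sums
   B_a(j) = sum_(n<=j) q^(n^2+an) / ((q;q)_n^2 (q;q)_(j-n)).  By q-Chu-Vandermonde
   B_0(j) = 1/(q;q)_j^2, and B_(-1), B_(-2) follow from the Pascal-type recurrence
   B_a(j+1) = B_a(j) + q^(j+1) B_(a-1)(j+1).  At q = 0 the series are finite. *)

From Stdlib Require Import Reals ZArith Lia Lra ClassicalEpsilon.
From Coquelicot Require Import Coquelicot.
Open Scope C_scope.

(* Coquelicot states sums in the carrier of [C_NormedModule], where [ring] and [field]
   do not recognise the field structure of [C]. *)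
Ltac to_C := lazymatch goal with |- ?a = ?b => change (@eq C a b) end.
Ltac ring_C := to_C; ring.

Lemma filterlim_C_eps (f : nat -> C) (l : C) :
  filterlim f eventually (locally l) <->
  (forall eps : posreal, exists N, forall n, (N <= n)%nat -> Cmod (f n - l) < eps).
Proof.
  rewrite (filterlim_locally_ball_norm (F := eventually)).
  split; intros H eps; destruct (H eps) as [N HN]; exists N; exact HN.
Qed.

Lemma C_eq_of_Cmod_sub_lt (x y : C) : (forall eps : posreal, Cmod (x - y) < eps) -> x = y.
Proof.
  intros H. destruct (Req_dec (Cmod (x - y)) 0) as [h|h].
  - apply Cmod_eq_0 in h. replace x with ((x - y) + y) by ring. rewrite h. ring.
  - assert (hp : 0 < Cmod (x - y)) by (assert (h' := Cmod_ge_0 (x - y)); lra).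
    specialize (H (mkposreal _ hp)). simpl in H. lra.
Qed.

Lemma is_series_C_eps (a : nat -> C) (l : C) :
  is_series a l <->
  (forall eps : posreal, exists N, forall n, (N <= n)%nat -> Cmod (sum_n a n - l) < eps).
Proof. apply filterlim_C_eps. Qed.

Lemma is_series_C_unique (a : nat -> C) (x y : C) : is_series a x -> is_series a y -> x = y.
Proof. apply filterlim_locally_unique. Qed.

Lemma sum_n_SC (a : nat -> C) n : sum_n a (S n) = sum_n a n + a (S n).
Proof. rewrite sum_Sn. reflexivity. Qed.

Lemma sum_n_scal_lC (c : C) (a : nat -> C) n : sum_n (fun j => c * a j) n = c * sum_n a n.
Proof. induction n; rewrite ?sum_O, ?sum_n_SC, ?IHn; ring_C. Qed.

Lemma sum_n_plusC (a b : nat -> C) n : sum_n (fun j => a j + b j) n = sum_n a n + sum_n b n.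
Proof. induction n; rewrite ?sum_O, ?sum_n_SC, ?IHn; ring_C. Qed.

Lemma sum_n_minusC (a b : nat -> C) n : sum_n (fun j => a j - b j) n = sum_n a n - sum_n b n.
Proof. induction n; rewrite ?sum_O, ?sum_n_SC, ?IHn; ring_C. Qed.

Lemma sum_n_shift_l (a : nat -> C) n : sum_n a (S n) = a 0%nat + sum_n (fun j => a (S j)) n.
Proof. induction n; rewrite sum_n_SC, ?sum_O, ?IHn, ?sum_n_SC; ring_C. Qed.

Lemma sum_n_telescope (a : nat -> C) n : sum_n (fun i => a (S i) - a i) n = a (S n) - a 0%nat.
Proof. induction n; rewrite ?sum_O, ?sum_n_SC, ?IHn; ring_C. Qed.

Lemma Cmod_sum_n_le (a : nat -> C) n : Cmod (sum_n a n) <= sum_n (fun k => Cmod (a k)) n.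
Proof.
  induction n; rewrite ?sum_O, ?sum_n_SC, ?sum_Sn; [lra|].
  simpl; unfold plus; simpl. eapply Rle_trans; [apply Cmod_triangle|lra].
Qed.

Lemma sum_n_mono_R (b : nat -> R) n m :
  (forall k, 0 <= b k) -> (n <= m)%nat -> sum_n b n <= sum_n b m.
Proof.
  intros Hb Hnm; induction Hnm as [|m _ IH]; [lra|].
  rewrite sum_Sn; specialize (Hb (S m)); simpl in *; unfold plus; simpl; lra.
Qed.

Lemma sum_n_le_is_series (b : nat -> R) B n :
  (forall k, 0 <= b k) -> is_series b B -> sum_n b n <= B.
Proof.
  intros Hb HB.
  apply (filterlim_le (F := eventually) (fun _ => sum_n b n) (sum_n b) (sum_n b n) B).
  - exists n; intros; apply sum_n_mono_R; auto.
  - apply is_lim_seq_const.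
  - exact HB.
Qed.

Lemma is_series_Cmod_le (a : nat -> C) (b : nat -> R) A B :
  is_series a A -> is_series b B -> (forall k, Cmod (a k) <= b k) -> Cmod A <= B.
Proof.
  intros HA HB Hab.
  apply (filterlim_le (F := eventually) (fun n => Cmod (sum_n a n)) (sum_n b) (Cmod A) B).
  - exists 0%nat; intros n _. eapply Rle_trans; [apply Cmod_sum_n_le|].
    apply sum_n_m_le. exact Hab.
  - exact (filterlim_comp _ _ _ (sum_n a) norm eventually (locally A) _ HA
             (filterlim_norm (V := C_NormedModule) A)).
  - exact HB.
Qed.

Lemma ex_series_C_le (a : nat -> C) (b : nat -> R) :
  (forall k, Cmod (a k) <= b k) -> ex_series b -> exists A, is_series a A.
Proof.
  intros H Hb. apply (ex_series_le (K := C_AbsRing) (V := C_CompleteNormedModule) a b); auto.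
Qed.

Lemma is_series_C_finite (a : nat -> C) N :
  (forall j, (N < j)%nat -> a j = 0) -> is_series a (sum_n a N).
Proof.
  intros H. apply is_series_C_eps. intros eps. exists N. intros n Hn.
  replace (sum_n a n) with (sum_n a N).
  - replace (sum_n a N - sum_n a N) with (RtoC 0) by ring. rewrite Cmod_0. apply cond_pos.
  - induction Hn as [|n Hn IH]; [reflexivity|].
    rewrite sum_n_SC, <- IH, H by lia. symmetry; apply Cplus_0_r.
Qed.

Lemma is_series_C_tail (a : nat -> C) (L : C) n :
  is_series a L -> is_series (fun k => a (S n + k)%nat) (L - sum_n a n).
Proof.
  intros H. apply (is_series_incr_n a (S n)); [lia|]. simpl.
  assert (E : plus (L - sum_n a n) (sum_n a n) = L).
  { change (L - sum_n a n + sum_n a n = L). ring. }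
  rewrite <- E in H. exact H.
Qed.

Lemma is_series_C_leading_zeros (a : nat -> C) j L : (forall k, (k < j)%nat -> a k = 0) ->
  is_series (fun l => a (j + l)%nat) L -> is_series a L.
Proof.
  intros H HL. destruct j as [|j]; [exact HL|].
  apply (is_series_decr_n (K := C_AbsRing) (V := C_NormedModule) a (S j)); [lia|].
  assert (E : forall i, (i <= j)%nat -> sum_n a i = RtoC 0).
  { clear HL. induction i; intros Hi; [rewrite sum_O; apply H; lia|].
    rewrite sum_n_SC, IHi, H by lia. apply Cplus_0_r. }
  simpl Init.Nat.pred. change (is_series (fun l => a (S j + l)%nat) (L + - sum_n a j)).
  rewrite E by lia. change (is_series (fun l => a (S j + l)%nat) (L + - 0)).
  rewrite Copp_0, Cplus_0_r. exact HL.
Qed.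

Lemma is_series_geom_shift (c r : R) (m : nat) : 0 <= r < 1 ->
  is_series (fun k => c * r ^ (m + k))%R (c * r ^ m / (1 - r))%R.
Proof.
  intros Hr.
  assert (H := is_series_geom r ltac:(rewrite Rabs_pos_eq; lra)).
  apply (is_series_scal (c * r ^ m)%R) in H.
  eapply is_series_ext; [|exact H]. intro n. unfold scal; simpl; unfold mult; simpl.
  rewrite pow_add. ring.
Qed.

Lemma eventually_geom_lt (c r : R) : 0 <= r < 1 ->
  forall eps : posreal, exists N, forall n, (N <= n)%nat -> (c * r ^ n < eps)%R.
Proof.
  intros Hr eps.
  assert (Hr' : Rabs r < 1) by (rewrite Rabs_pos_eq; lra).
  assert (Hl := is_lim_seq_scal_l _ c 0 (is_lim_seq_geom r Hr')).
  simpl in Hl. rewrite Rmult_0_r in Hl. apply is_lim_seq_spec in Hl. destruct (Hl eps) as [N HN].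
  exists N. intros n Hn. specialize (HN n Hn). apply Rabs_def2 in HN. lra.
Qed.

Lemma sum_n_geom_le (r : R) n : 0 <= r < 1 -> sum_n (fun i => r ^ i)%R n <= / (1 - r).
Proof.
  intros Hr. apply sum_n_le_is_series; [intro; apply pow_le; lra|].
  apply is_series_geom. rewrite Rabs_pos_eq; lra.
Qed.

Definition geom_dominated (A r : R) (u : nat -> nat -> C) : Prop :=
  forall i j, Cmod (u i j) <= A * r ^ i * r ^ j.

Section DoubleSeries.

Variables (A r : R).
Hypothesis hr : 0 <= r < 1.

Lemma geom_dominated_coef_ge0 u : geom_dominated A r u -> 0 <= A.
Proof.
  intros Hu. specialize (Hu 0%nat 0%nat). simpl in Hu.
  assert (0 <= Cmod (u 0%nat 0%nat)) by apply Cmod_ge_0. nra.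
Qed.

(* The sum of the first n+1 rows differs from the (n+1) x (n+1) square partial sum
   by the tails of these rows. *)
Lemma rows_near_square (u : nat -> nat -> C) (U : nat -> C) n :
  geom_dominated A r u -> (forall i, is_series (u i) (U i)) ->
  Cmod (sum_n U n - sum_n (fun i => sum_n (u i) n) n) <= A * r ^ S n / (1 - r) / (1 - r).
Proof.
  intros Hu HU. assert (HA := geom_dominated_coef_ge0 u Hu).
  assert (Htail : forall i, Cmod (U i - sum_n (u i) n) <= A * r ^ S n / (1 - r) * r ^ i).
  { intro i. eapply Rle_trans.
    - eapply is_series_Cmod_le.
      + apply is_series_C_tail, HU.
      + apply (is_series_geom_shift (A * r ^ i) r (S n) hr).
      + intro k. simpl. eapply Rle_trans; [apply Hu|]. simpl. lra.
    - right. field. lra. }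
  rewrite <- sum_n_minusC. eapply Rle_trans; [apply Cmod_sum_n_le|].
  eapply Rle_trans; [apply sum_n_m_le, Htail|].
  change (sum_n (fun i => A * r ^ S n / (1 - r) * r ^ i)%R n <= A * r ^ S n / (1 - r) / (1 - r)).
  rewrite (sum_n_mult_l (K := R_Ring)). unfold mult; simpl.
  apply Rmult_le_compat_l; [|apply sum_n_geom_le, hr].
  assert (0 <= r ^ S n)%R by (apply pow_le; lra).
  apply Rmult_le_pos; [apply Rmult_le_pos; auto|].
  left; apply Rinv_0_lt_compat; lra.
Qed.

(* Fubini for double series dominated by a product of geometric sequences: both row
   sums and column sums stay within O(r^n) of the square partial sums. *)
Lemma is_series_swap (u : nat -> nat -> C) (U W : nat -> C) :
  geom_dominated A r u -> (forall i, is_series (u i) (U i)) ->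
  (forall j, is_series (fun i => u i j) (W j)) ->
  exists L, is_series U L /\ is_series W L.
Proof.
  intros Hu HU HW. assert (HA := geom_dominated_coef_ge0 u Hu).
  destruct (ex_series_C_le U (fun i => A / (1 - r) * r ^ (0 + i))%R) as [L HS].
  { intro i. apply Rle_trans with (A * r ^ i * r ^ 0 / (1 - r))%R.
    - eapply is_series_Cmod_le; [apply HU|apply (is_series_geom_shift (A * r ^ i) r 0 hr)|].
      intro k; simpl. eapply Rle_trans; [apply Hu|]. right; ring.
    - simpl. right. field. lra. }
  { eexists. apply (is_series_geom_shift (A / (1 - r)) r 0 hr). }
  exists L. split; [exact HS|].
  apply is_series_C_eps. intro eps.
  assert (he : 0 < eps / 2) by (destruct eps; simpl; lra).
  destruct (proj1 (is_series_C_eps U L) HS (mkposreal _ he)) as [N1 HN1].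
  destruct (eventually_geom_lt (2 * (A * r / (1 - r) / (1 - r))) r hr (mkposreal _ he)) as [N2 HN2].
  simpl in HN1, HN2. exists (Nat.max N1 N2). intros n Hn.
  assert (Hrow := rows_near_square u U n Hu HU).
  assert (Hcol := rows_near_square (fun j i => u i j) W n
                    ltac:(intros i j; eapply Rle_trans; [apply Hu|right; ring]) HW).
  rewrite <- sum_n_switch in Hcol.
  specialize (HN1 n ltac:(lia)). specialize (HN2 n ltac:(lia)).
  set (Sq := sum_n (fun i => sum_n (u i) n) n) in *.
  replace (sum_n W n - L) with ((sum_n W n - Sq) - (sum_n U n - Sq) + (sum_n U n - L)) by ring.
  eapply Rle_lt_trans; [apply Cmod_triangle|]. unfold Cminus at 1.
  eapply Rle_lt_trans; [apply Rplus_le_compat_r, Cmod_triangle|]. rewrite Cmod_opp.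
  replace (2 * (A * r / (1 - r) / (1 - r)) * r ^ n)%R
    with (2 * (A * r ^ S n / (1 - r) / (1 - r)))%R in HN2 by (simpl; field; lra).
  lra.
Qed.

End DoubleSeries.

Lemma cpow_add (x : C) a b : cpow x (a + b) = cpow x a * cpow x b.
Proof. induction a; simpl; [ring|rewrite IHa; ring]. Qed.

Lemma cpow_neq0 (x : C) n : x <> 0 -> cpow x n <> 0.
Proof. intros Hx; induction n; simpl; [apply C1_nz|apply Cmult_neq_0; auto]. Qed.

Lemma Cmod_cpow (x : C) n : Cmod (cpow x n) = (Cmod x ^ n)%R.
Proof. induction n; simpl; [apply Cmod_1|rewrite Cmod_mult, IHn; reflexivity]. Qed.

Lemma cpow_m1_sqr n : cpow (-1) n * cpow (-1) n = 1.
Proof. induction n; simpl; [ring|]. rewrite <- IHn. ring. Qed.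

Lemma Cmod_cpow_m1 n : Cmod (cpow (-1) n) = 1%R.
Proof.
  rewrite Cmod_cpow, Cmod_R, Rabs_left by lra. replace (- -1)%R with 1%R by ring. apply pow1.
Qed.

Lemma Cmult_reg_l (c a b : C) : c <> 0 -> c * a = c * b -> a = b.
Proof. intros Hc H. replace a with (/ c * (c * a)) by (field; auto). rewrite H. field; auto. Qed.

Lemma cpowZ_nat (q : C) n : cpowZ q (Z.of_nat n) = cpow q n.
Proof. destruct n; [reflexivity|]. simpl. rewrite SuccNat2Pos.id_succ. reflexivity. Qed.

Section IntegerPowers.

Variable q : C.
Hypothesis hq0 : q <> 0.

Lemma cpowZ_opp_nat n : cpowZ q (- Z.of_nat n) = / cpow q n.
Proof.
  destruct n; [simpl; field|]. simpl. rewrite SuccNat2Pos.id_succ. reflexivity.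
Qed.

Lemma cpowZ_succ z : cpowZ q (z + 1) = cpowZ q z * q.
Proof.
  destruct (Z_le_gt_dec 0 z) as [h|h].
  - replace (z + 1)%Z with (Z.of_nat (S (Z.to_nat z))) by lia.
    replace z with (Z.of_nat (Z.to_nat z)) at 2 by lia.
    rewrite !cpowZ_nat. simpl. ring.
  - replace z with (- Z.of_nat (S (Z.to_nat (- z - 1))))%Z by lia.
    replace (- Z.of_nat (S (Z.to_nat (- z - 1))) + 1)%Z with (- Z.of_nat (Z.to_nat (- z - 1)))%Z by lia.
    rewrite !cpowZ_opp_nat. simpl. field. split; auto. apply cpow_neq0; auto.
Qed.

Lemma cpowZ_add a b : cpowZ q (a + b) = cpowZ q a * cpowZ q b.
Proof.
  induction b using Z.peano_ind.
  - rewrite Z.add_0_r. simpl. ring.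
  - rewrite <- Z.add_1_r, Z.add_assoc, !cpowZ_succ, IHb. ring.
  - apply (Cmult_reg_l q); auto. rewrite <- Z.sub_1_r.
    rewrite (Cmult_comm q (cpowZ q (a + (b - 1)))), (Cmult_comm q (cpowZ q a * cpowZ q (b - 1))).
    rewrite <- Cmult_assoc, <- !cpowZ_succ.
    replace (a + (b - 1) + 1)%Z with (a + b)%Z by lia. replace (b - 1 + 1)%Z with b by lia. exact IHb.
Qed.

Lemma cpowZ_mul_opp z : cpowZ q z * cpowZ q (- z) = 1.
Proof. rewrite <- cpowZ_add, Z.add_opp_diag_r. reflexivity. Qed.

Lemma cpowZ_neq0 z : cpowZ q z <> 0.
Proof. intros H. apply C1_nz. rewrite <- (cpowZ_mul_opp z), H. ring. Qed.

Lemma cpowZ_opp z : cpowZ q (- z) = / cpowZ q z.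
Proof.
  apply (Cmult_reg_l (cpowZ q z)); [apply cpowZ_neq0|].
  rewrite cpowZ_mul_opp, Cinv_r; [reflexivity|apply cpowZ_neq0].
Qed.

Lemma cpow_cpowZ e n : cpow (cpowZ q e) n = cpowZ q (e * Z.of_nat n).
Proof.
  induction n; [rewrite Z.mul_0_r; reflexivity|].
  rewrite Nat2Z.inj_succ, Z.mul_succ_r, cpowZ_add, <- IHn. simpl. ring.
Qed.

Lemma Cmod_cpowZ z : Cmod (cpowZ q z) = powerRZ (Cmod q) z.
Proof.
  destruct z; simpl; [apply Cmod_1|apply Cmod_cpow|].
  rewrite Cmod_inv, Cmod_cpow; [reflexivity|apply cpow_neq0; auto].
Qed.

End IntegerPowers.

Lemma pow_le_1 (r : R) n : 0 <= r <= 1 -> (r ^ n <= 1)%R.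
Proof. intros Hr. induction n; simpl; [lra|]. assert (0 <= r ^ n)%R by (apply pow_le; lra). nra. Qed.

Lemma powerRZ_le_antimono (r : R) a b : 0 < r <= 1 -> (a <= b)%Z -> powerRZ r b <= powerRZ r a.
Proof.
  intros Hr Hab. replace b with (a + Z.of_nat (Z.to_nat (b - a)))%Z by lia.
  rewrite powerRZ_add, <- pow_powerRZ by lra.
  assert (0 < powerRZ r a) by (apply powerRZ_lt; lra).
  assert (r ^ Z.to_nat (b - a) <= 1)%R by (apply pow_le_1; lra).
  assert (0 <= r ^ Z.to_nat (b - a))%R by (apply pow_le; lra).
  nra.
Qed.

Lemma powerRZ_le_geom (r : R) (f : Z) (l : nat) (D : Z) :
  0 < r <= 1 -> (Z.of_nat l - D <= f)%Z -> (powerRZ r f <= powerRZ r (- D) * r ^ l)%R.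
Proof.
  intros Hr H. eapply Rle_trans; [apply (powerRZ_le_antimono r (Z.of_nat l - D)); auto|].
  replace (Z.of_nat l - D)%Z with (- D + Z.of_nat l)%Z by lia.
  rewrite powerRZ_add, <- pow_powerRZ by lra. lra.
Qed.

(** * Bounds on q-Pochhammer symbols *)

Lemma Cmod_1_sub_ge (y : C) : (1 - Cmod y <= Cmod (1 - y))%R.
Proof.
  assert (H : Cmod 1 <= Cmod (1 - y) + Cmod y).
  { replace (RtoC 1) with ((1 - y) + y) at 1 by ring. apply Cmod_triangle. }
  rewrite Cmod_1 in H. lra.
Qed.

Lemma Cmod_1_sub_le (y : C) : (Cmod (1 - y) <= 1 + Cmod y)%R.
Proof. unfold Cminus. eapply Rle_trans; [apply Cmod_triangle|]. rewrite Cmod_opp, Cmod_1. lra. Qed.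

Lemma exp_le_mono x y : (x <= y)%R -> (exp x <= exp y)%R.
Proof. intros [h|h]; [left; apply exp_increasing; auto|subst; lra]. Qed.

Lemma exp_opp_le_1_sub (x r : R) : 0 <= x <= r -> r < 1 -> (exp (- (x / (1 - r))) <= 1 - x)%R.
Proof.
  intros Hx Hr.
  assert (H1 : (x / (1 - x) <= x / (1 - r))%R).
  { unfold Rdiv. apply Rmult_le_compat_l; [lra|]. apply Rinv_le_contravar; lra. }
  assert (H2 := exp_ineq1_le (x / (1 - x))).
  assert (H3 := exp_le_mono _ _ H1).
  assert (H4 : ((1 - x) * (1 + x / (1 - x)) = 1)%R) by (field; lra).
  assert (H5 : (exp (- (x / (1 - r))) * exp (x / (1 - r)) = 1)%R)
    by (rewrite <- exp_plus, Rplus_opp_l; apply exp_0).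
  assert (H6 : (1 <= (1 - x) * exp (x / (1 - r)))%R).
  { apply Rle_trans with ((1 - x) * (1 + x / (1 - x)))%R; [lra|].
    apply Rmult_le_compat_l; lra. }
  assert (H7 : (exp (- (x / (1 - r))) * ((1 - x) * exp (x / (1 - r))) = 1 - x)%R).
  { transitivity ((1 - x) * (exp (- (x / (1 - r))) * exp (x / (1 - r))))%R; [ring|].
    rewrite H5. ring. }
  assert (0 < exp (- (x / (1 - r))))%R by apply exp_pos.
  rewrite <- H7, <- (Rmult_1_r (exp (- (x / (1 - r))))) at 1.
  apply Rmult_le_compat_l; lra.
Qed.

Definition qpoch_bound (q : C) : R := exp (/ (1 - Cmod q)).
Definition qpoch_inv_bound (q : C) : R := exp (/ (1 - Cmod q) / (1 - Cmod q)).

Lemma qpoch_inv_bound_gt0 (q : C) : 0 < qpoch_inv_bound q.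
Proof. apply exp_pos. Qed.

Section PochhammerBounds.

Variable q : C.
Hypothesis hq : Cmod q < 1.

Ltac set_r := set (r := Cmod q) in *; assert (r_ge0 : 0 <= r) by apply Cmod_ge_0.

Lemma one_sub_qpow_neq0 j : 1 - q * cpow q j <> 0.
Proof.
  intros H. assert (h := Cmod_1_sub_ge (q * cpow q j)).
  rewrite H, Cmod_0, Cmod_mult, Cmod_cpow in h. set_r.
  assert (r ^ j <= 1)%R by (apply pow_le_1; lra). nra.
Qed.

Lemma qpoch_neq0 n : qpoch q q n <> 0.
Proof. induction n; simpl; [apply C1_nz|apply Cmult_neq_0; auto; apply one_sub_qpow_neq0]. Qed.

Lemma Cmod_qpoch_le n : (Cmod (qpoch q q n) <= qpoch_bound q)%R.
Proof.
  unfold qpoch_bound. set_r.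
  assert (H : Cmod (qpoch q q n) <= exp (r * (1 - r ^ n) / (1 - r))).
  { induction n; simpl qpoch.
    - rewrite Cmod_1. replace (r * (1 - r ^ 0) / (1 - r))%R with 0%R by (simpl; field; lra).
      rewrite exp_0; lra.
    - rewrite Cmod_mult.
      replace (r * (1 - r ^ S n) / (1 - r))%R with (r * (1 - r ^ n) / (1 - r) + r * r ^ n)%R
        by (simpl; field; lra).
      rewrite exp_plus. apply Rmult_le_compat; try apply Cmod_ge_0; auto.
      eapply Rle_trans; [apply Cmod_1_sub_le|]. rewrite Cmod_mult, Cmod_cpow. apply exp_ineq1_le. }
  eapply Rle_trans; [exact H|]. apply exp_le_mono.
  assert (0 <= r ^ n <= 1)%R by (split; [apply pow_le|apply pow_le_1]; lra).
  assert (0 < / (1 - r))%R by (apply Rinv_0_lt_compat; lra).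
  unfold Rdiv. rewrite <- (Rmult_1_l (/ (1 - r))) at 2. apply Rmult_le_compat_r; nra.
Qed.

Lemma Cmod_qpoch_ge n :
  (exp (- (Cmod q * (1 - Cmod q ^ n) / (1 - Cmod q) / (1 - Cmod q))) <= Cmod (qpoch q q n))%R.
Proof.
  set_r. induction n; simpl qpoch.
  - rewrite Cmod_1. replace (r * (1 - r ^ 0) / (1 - r) / (1 - r))%R with 0%R by (simpl; field; lra).
    rewrite Ropp_0, exp_0; lra.
  - rewrite Cmod_mult.
    replace (- (r * (1 - r ^ S n) / (1 - r) / (1 - r)))%R
      with (- (r * (1 - r ^ n) / (1 - r) / (1 - r)) + - (r * r ^ n / (1 - r)))%R
      by (simpl; field; lra).
    rewrite exp_plus. apply Rmult_le_compat; try (left; apply exp_pos); auto.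
    assert (0 <= r ^ n <= 1)%R by (split; [apply pow_le|apply pow_le_1]; lra).
    eapply Rle_trans; [apply (exp_opp_le_1_sub _ r)|]; [nra|lra|].
    eapply Rle_trans; [|apply Cmod_1_sub_ge]. rewrite Cmod_mult, Cmod_cpow. fold r. lra.
Qed.

Lemma qpoch_inv_bound_ge1 n : (1 <= qpoch_inv_bound q * Cmod (qpoch q q n))%R.
Proof.
  eapply Rle_trans; [|apply Rmult_le_compat_l; [left; apply exp_pos|apply Cmod_qpoch_ge]].
  unfold qpoch_inv_bound. set_r. rewrite <- exp_plus.
  apply Rle_trans with (exp 0); [rewrite exp_0; lra|apply exp_le_mono].
  assert (0 <= r ^ n <= 1)%R by (split; [apply pow_le|apply pow_le_1]; lra).
  assert (0 < / (1 - r))%R by (apply Rinv_0_lt_compat; lra).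
  replace (/ (1 - r) / (1 - r) + - (r * (1 - r ^ n) / (1 - r) / (1 - r)))%R
    with ((1 - r * (1 - r ^ n)) * / (1 - r) * / (1 - r))%R by (field; lra).
  apply Rmult_le_pos; [apply Rmult_le_pos|]; nra.
Qed.

Lemma Cmod_inv_qpoch_le n : (Cmod (/ qpoch q q n) <= qpoch_inv_bound q)%R.
Proof.
  assert (Hp : 0 < Cmod (qpoch q q n)) by (apply Cmod_gt_0, qpoch_neq0).
  assert (H := qpoch_inv_bound_ge1 n).
  rewrite Cmod_inv by apply qpoch_neq0.
  apply (Rmult_le_reg_r (Cmod (qpoch q q n))); auto. rewrite Rinv_l by lra. lra.
Qed.

Lemma Cmod_div_qpoch4_le (a : C) n j l :
  (Cmod (a / (cpow (qpoch q q n) 2 * qpoch q q j * qpoch q q l)) <= Cmod a * qpoch_inv_bound q ^ 4)%R.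
Proof.
  assert (Q := qpoch_neq0).
  replace (a / (cpow (qpoch q q n) 2 * qpoch q q j * qpoch q q l))
    with (a * (/ qpoch q q n * / qpoch q q n * / qpoch q q j * / qpoch q q l))
    by (simpl; field; repeat split; auto).
  rewrite !Cmod_mult. apply Rmult_le_compat_l; [apply Cmod_ge_0|].
  assert (B := Cmod_inv_qpoch_le). assert (G := fun n => Cmod_ge_0 (/ qpoch q q n)).
  simpl. rewrite Rmult_1_r, <- !Rmult_assoc.
  repeat apply Rmult_le_compat; auto; repeat apply Rmult_le_pos; auto.
Qed.

Lemma is_qpoch_inf_exists : exists P, is_qpoch_inf q P.
Proof.
  set_r. destruct (ex_series_C_le (fun i => qpoch q q (S i) - qpoch q q i)
                     (fun i => qpoch_bound q * r ^ (0 + i))%R) as [D HD].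
  { intro i. simpl qpoch.
    replace (qpoch q q i * (1 - q * cpow q i) - qpoch q q i) with (qpoch q q i * - (q * cpow q i)) by ring.
    rewrite Cmod_mult, Cmod_opp, Cmod_mult, Cmod_cpow. fold r. simpl.
    assert (0 <= r ^ i)%R by (apply pow_le; auto).
    assert (r * r ^ i <= r ^ i)%R by nra.
    apply Rmult_le_compat; [apply Cmod_ge_0|nra|apply Cmod_qpoch_le|nra]. }
  { eexists. apply (is_series_geom_shift _ r 0). lra. }
  exists (1 + D). apply filterlim_C_eps. intro eps.
  destruct (proj1 (is_series_C_eps _ D) HD eps) as [N HN].
  exists (S N). intros n Hn. destruct n as [|n]; [lia|].
  specialize (HN n ltac:(lia)). rewrite sum_n_telescope in HN.
  replace (qpoch q q (S n) - (1 + D)) with (qpoch q q (S n) - qpoch q q 0 - D) by (simpl; ring).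
  exact HN.
Qed.

Lemma is_qpoch_inf_neq0 P : is_qpoch_inf q P -> P <> 0.
Proof.
  intros HP ->. assert (hK := qpoch_inv_bound_gt0 q).
  assert (he : 0 < / (2 * qpoch_inv_bound q)) by (apply Rinv_0_lt_compat; lra).
  destruct (proj1 (filterlim_C_eps _ 0) HP (mkposreal _ he)) as [N HN].
  specialize (HN N (le_n _)). simpl in HN. replace (qpoch q q N - 0) with (qpoch q q N) in HN by ring.
  assert (h := qpoch_inv_bound_ge1 N).
  apply (Rmult_lt_compat_l (qpoch_inv_bound q)) in HN; [|lra].
  replace (qpoch_inv_bound q * / (2 * qpoch_inv_bound q))%R with (/ 2)%R in HN by (field; lra). lra.
Qed.

End PochhammerBounds.

(** * Euler's identity *)

Definition tri (l : nat) : Z := (Z.of_nat l * (Z.of_nat l + 1) / 2)%Z.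

Lemma tri_double l : (2 * tri l = Z.of_nat l * (Z.of_nat l + 1))%Z.
Proof.
  unfold tri. induction l; [reflexivity|]. rewrite Nat2Z.inj_succ.
  replace (Z.succ (Z.of_nat l) * (Z.succ (Z.of_nat l) + 1))%Z
    with (Z.of_nat l * (Z.of_nat l + 1) + (Z.of_nat l + 1) * 2)%Z by lia.
  rewrite Z.div_add by lia. lia.
Qed.

Lemma tri_S l : tri (S l) = (tri l + Z.of_nat l + 1)%Z.
Proof. assert (h1 := tri_double l). assert (h2 := tri_double (S l)). lia. Qed.

Lemma tri_add a b : tri (a + b) = (tri a + tri b + Z.of_nat a * Z.of_nat b)%Z.
Proof. assert (h1 := tri_double a). assert (h2 := tri_double b). assert (h3 := tri_double (a + b)). nia. Qed.

Lemma tri_add_linear_ge l e : (Z.of_nat l - 2 * (e - 1) * (e - 1) <= tri l + e * Z.of_nat l)%Z.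
Proof.
  assert (h := tri_double l).
  assert (h1 := Z.square_nonneg (Z.of_nat l + e - 1)). assert (h2 := Z.square_nonneg (e - 1)). nia.
Qed.

(* [euler_term q e] sums to [(q^(e+1); q)_oo]: Euler's expansion of [(z; q)_oo] at [z = q^(e+1)]. *)
Definition euler_term (q : C) (e : Z) (l : nat) : C :=
  cpow (-1) l * cpowZ q (tri l + e * Z.of_nat l) / qpoch q q l.

Lemma euler_term_0 (q : C) e : euler_term q e 0 = 1.
Proof. unfold euler_term. simpl. rewrite Z.mul_0_r. simpl. field. Qed.

Section Euler.

Variable q : C.
Hypotheses (hq0 : q <> 0) (hq : Cmod q < 1).

Let hr : 0 < Cmod q <= 1.
Proof. split; [apply Cmod_gt_0; auto|lra]. Qed.

Lemma Cmod_euler_term_le e l :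
  (Cmod (euler_term q e l) <= qpoch_inv_bound q * powerRZ (Cmod q) (tri l + e * Z.of_nat l))%R.
Proof.
  unfold euler_term, Cdiv. rewrite !Cmod_mult, Cmod_cpow_m1, Cmod_cpowZ by auto.
  assert (h := Cmod_inv_qpoch_le q hq l).
  assert (0 <= powerRZ (Cmod q) (tri l + e * Z.of_nat l))%R by (apply powerRZ_le; lra).
  nra.
Qed.

Lemma ex_series_euler e : exists X, is_series (euler_term q e) X.
Proof.
  apply (ex_series_C_le _
    (fun l => qpoch_inv_bound q * powerRZ (Cmod q) (- (2 * (e - 1) * (e - 1))) * Cmod q ^ (0 + l))%R).
  - intro l. eapply Rle_trans; [apply Cmod_euler_term_le|].
    rewrite Rmult_assoc. apply Rmult_le_compat_l; [left; apply qpoch_inv_bound_gt0|].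
    apply powerRZ_le_geom; [lra|apply tri_add_linear_ge].
  - eexists. apply is_series_geom_shift. split; [apply Cmod_ge_0|auto].
Qed.

Lemma euler_term_S e l :
  euler_term q e (S l) - euler_term q (e + 1) (S l) = - cpowZ q (e + 1) * euler_term q (e + 1) l.
Proof.
  unfold euler_term.
  replace (tri (S l) + e * Z.of_nat (S l))%Z with ((tri l + (e + 1) * Z.of_nat l) + (e + 1))%Z
    by (rewrite tri_S; lia).
  replace (tri (S l) + (e + 1) * Z.of_nat (S l))%Z
    with ((tri l + (e + 1) * Z.of_nat l) + (e + 1) + Z.of_nat (S l))%Z by (rewrite tri_S; lia).
  rewrite !cpowZ_add, cpowZ_nat by auto. simpl.
  assert (h1 := qpoch_neq0 q hq l). assert (h2 := one_sub_qpow_neq0 q hq l).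
  field. auto.
Qed.

Lemma euler_series_rec e (X Y : C) :
  is_series (euler_term q e) X -> is_series (euler_term q (e + 1)) Y -> X = (1 - cpowZ q (e + 1)) * Y.
Proof.
  intros HX HY.
  set (a := fun l => euler_term q e l - euler_term q (e + 1) l).
  assert (H1 : is_series a (X - Y)) by exact (is_series_minus _ _ _ _ HX HY).
  assert (H2 : is_series (fun l => a (S l)) (- cpowZ q (e + 1) * Y)).
  { eapply is_series_ext;
      [|apply (is_series_scal (K := C_AbsRing) (V := C_NormedModule) (- cpowZ q (e + 1))); exact HY].
    intro n. symmetry. apply euler_term_S. }
  assert (Ha0 : a 0%nat = 0) by (unfold a; rewrite !euler_term_0; ring).
  assert (H3 : is_series a (- cpowZ q (e + 1) * Y)).
  { apply (is_series_C_leading_zeros a 1); [intros k Hk; replace k with 0%nat by lia; exact Ha0|exact H2]. }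
  assert (E := is_series_C_unique _ _ _ H1 H3).
  replace X with ((X - Y) + Y) by ring_C. rewrite E. ring_C.
Qed.

(* At [e = -1] the factor [1 - q^0] vanishes. *)
Lemma euler_series_neg (d : nat) (X : C) : is_series (euler_term q (- Z.of_nat d - 1)) X -> X = 0.
Proof.
  revert X. induction d as [|d IH]; intros X HX.
  - destruct (ex_series_euler 0) as [Y HY].
    rewrite (euler_series_rec _ X Y HX) by exact HY. simpl. ring.
  - destruct (ex_series_euler (- Z.of_nat d - 1)) as [Y HY].
    replace (- Z.of_nat d - 1)%Z with ((- Z.of_nat (S d) - 1) + 1)%Z in HY by lia.
    rewrite (euler_series_rec _ X Y HX HY).
    replace ((- Z.of_nat (S d) - 1) + 1)%Z with (- Z.of_nat d - 1)%Z in HY by lia.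
    rewrite (IH Y HY). ring.
Qed.

Lemma euler_series_chain t (X : C) N (Y : C) : is_series (euler_term q (Z.of_nat t)) X ->
  is_series (euler_term q (Z.of_nat (t + N))) Y -> X * qpoch q q t = Y * qpoch q q (t + N).
Proof.
  intros HX. revert Y. induction N as [|N IH]; intros Y HY.
  - rewrite Nat.add_0_r in HY |- *. rewrite (is_series_C_unique _ _ _ HX HY). reflexivity.
  - destruct (ex_series_euler (Z.of_nat (t + N))) as [Y' HY']. rewrite (IH Y' HY').
    replace (Z.of_nat (t + S N)) with (Z.of_nat (t + N) + 1)%Z in HY by lia.
    rewrite (euler_series_rec _ Y' Y HY' HY).
    replace (Z.of_nat (t + N) + 1)%Z with (Z.of_nat (S (t + N))) by lia.
    rewrite cpowZ_nat. replace (t + S N)%nat with (S (t + N)) by lia. simpl. ring.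
Qed.

Lemma euler_series_near1 s (Y : C) : is_series (euler_term q (Z.of_nat s)) Y ->
  (Cmod (Y - 1) <= qpoch_inv_bound q * Cmod q ^ S s / (1 - Cmod q))%R.
Proof.
  intros HY. assert (HT := is_series_C_tail _ _ 0 HY). rewrite sum_O, euler_term_0 in HT.
  eapply is_series_Cmod_le; [exact HT| |].
  { apply (is_series_geom_shift _ (Cmod q) (S s)). split; [apply Cmod_ge_0|auto]. }
  intro l. simpl plus. eapply Rle_trans; [apply Cmod_euler_term_le|].
  apply Rmult_le_compat_l; [left; apply qpoch_inv_bound_gt0|].
  rewrite pow_powerRZ. apply powerRZ_le_antimono; [lra|].
  change (1 + l)%nat with (S l). assert (h := tri_double (S l)).
  rewrite !Nat2Z.inj_succ in *. rewrite !Nat2Z.inj_add, !Nat2Z.inj_succ. nia.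
Qed.

(* [X (q;q)_t = X_(t+N) (q;q)_(t+N)] by [euler_series_chain], and [X_s -> 1]. *)
Lemma euler_series_nat (P : C) t (X : C) : is_qpoch_inf q P ->
  is_series (euler_term q (Z.of_nat t)) X -> X = P / qpoch q q t.
Proof.
  intros HP HX. assert (Hr0 : 0 <= Cmod q) by apply Cmod_ge_0.
  assert (Hnz := qpoch_neq0 q hq t).
  apply (Cmult_reg_l (qpoch q q t)); auto. transitivity P; [|field; auto].
  rewrite Cmult_comm. apply C_eq_of_Cmod_sub_lt. intro eps.
  assert (he : 0 < eps / 2) by (destruct eps; simpl; lra).
  destruct (proj1 (filterlim_C_eps _ P) HP (mkposreal _ he)) as [N1 HN1].
  set (K := (qpoch_bound q * (qpoch_inv_bound q * Cmod q / (1 - Cmod q)))%R).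
  destruct (eventually_geom_lt K (Cmod q) ltac:(lra) (mkposreal _ he)) as [N2 HN2].
  simpl in HN1, HN2. set (M := (t + (N1 + N2))%nat).
  destruct (ex_series_euler (Z.of_nat M)) as [Y HY].
  rewrite (euler_series_chain t X (N1 + N2) Y HX HY). fold M.
  specialize (HN1 M ltac:(lia)). specialize (HN2 M ltac:(lia)).
  assert (hb := euler_series_near1 M Y HY). assert (hQ := Cmod_qpoch_le q hq M).
  replace (Y * qpoch q q M - P) with ((Y - 1) * qpoch q q M + (qpoch q q M - P)) by ring.
  eapply Rle_lt_trans; [apply Cmod_triangle|]. rewrite Cmod_mult.
  assert (Cmod (Y - 1) * Cmod (qpoch q q M) <= K * Cmod q ^ M)%R.
  { replace (K * Cmod q ^ M)%R with ((qpoch_inv_bound q * Cmod q ^ S M / (1 - Cmod q)) * qpoch_bound q)%R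
      by (unfold K; simpl; field; lra).
    apply Rmult_le_compat; auto; apply Cmod_ge_0. }
  lra.
Qed.

Lemma is_series_euler (P : C) e : is_qpoch_inf q P ->
  is_series (euler_term q e) (if (e <? 0)%Z then RtoC 0 else P / qpoch q q (Z.to_nat e)).
Proof.
  intros HP. destruct (ex_series_euler e) as [X HX].
  destruct (Z.ltb_spec e 0) as [h|h].
  - replace e with (- Z.of_nat (Z.to_nat (- e - 1)) - 1)%Z in HX |- * by lia.
    rewrite <- (euler_series_neg _ X HX). exact HX.
  - replace e with (Z.of_nat (Z.to_nat e)) in HX by lia.
    rewrite <- (euler_series_nat P _ X HP HX).
    replace (Z.of_nat (Z.to_nat e)) with e in HX by lia. exact HX.
Qed.

End Euler.

(** * The q-binomial theorem *)

Section QBinomial.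

Variable q : C.
Hypotheses (hq0 : q <> 0) (hq : Cmod q < 1).

Definition gauss_binom (k j : nat) : C :=
  if (j <=? k)%nat then qpoch q q k / (qpoch q q j * qpoch q q (k - j)) else 0.

Lemma gauss_binom_0 k : gauss_binom k 0 = 1.
Proof. unfold gauss_binom. simpl. rewrite Nat.sub_0_r. field. apply qpoch_neq0; auto. Qed.

Lemma gauss_binom_gt k j : (k < j)%nat -> gauss_binom k j = 0.
Proof. intros H. unfold gauss_binom. destruct (Nat.leb_spec j k); [lia|auto]. Qed.

Lemma gauss_binom_pascal k i :
  gauss_binom (S k) (S i) = gauss_binom k (S i) + cpow q (k - i) * gauss_binom k i.
Proof.
  assert (Q := qpoch_neq0 q hq). assert (F := one_sub_qpow_neq0 q hq).
  unfold gauss_binom.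
  destruct (Nat.leb_spec (S i) (S k)); destruct (Nat.leb_spec (S i) k);
    destruct (Nat.leb_spec i k); try lia.
  - set (d := (k - S i)%nat). assert (Hk : k = S (i + d)) by (unfold d; lia). clearbody d. subst k.
    replace (S (S (i + d)) - S i)%nat with (S d) by lia.
    replace (S (i + d) - S i)%nat with d by lia.
    replace (S (i + d) - i)%nat with (S d) by lia.
    simpl qpoch. replace (q * (q * cpow q (i + d))) with ((q * cpow q d) * (q * cpow q i))
      by (rewrite cpow_add; ring).
    change (cpow q (S d)) with (q * cpow q d). field. repeat split; auto.
  - replace i with k by lia. rewrite !Nat.sub_diag. simpl. field. split; auto.
  - ring.
Qed.

Definition qbinom_term (k j : nat) (x : C) : C :=
  gauss_binom k j * cpow (-1) j * cpowZ q (tri j - Z.of_nat j) * cpow x j.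

Lemma qbinom_term_S k i x : (i <= k)%nat -> qbinom_term (S k) (S i) x =
  qbinom_term k (S i) x + (- (x * cpow q k)) * qbinom_term k i x.
Proof.
  intros Hi. unfold qbinom_term. rewrite gauss_binom_pascal.
  assert (E : cpow q (k - i) * cpowZ q (tri (S i) - Z.of_nat (S i)) = cpow q k * cpowZ q (tri i - Z.of_nat i)).
  { rewrite <- !cpowZ_nat, <- !cpowZ_add by auto. f_equal. rewrite tri_S. lia. }
  transitivity (gauss_binom k (S i) * cpow (-1) (S i) * cpowZ q (tri (S i) - Z.of_nat (S i)) * cpow x (S i)
    - (cpow q (k - i) * cpowZ q (tri (S i) - Z.of_nat (S i))) * gauss_binom k i * cpow (-1) i * cpow x (S i)).
  - simpl. ring.
  - rewrite E. simpl. ring.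
Qed.

Theorem qpoch_binomial x k : qpoch x q k = sum_n (fun j => qbinom_term k j x) k.
Proof.
  induction k as [|k IH].
  - rewrite sum_O. unfold qbinom_term. rewrite gauss_binom_0. simpl. ring_C.
  - simpl qpoch. rewrite IH, sum_n_shift_l.
    rewrite (sum_n_ext_loc (fun j => qbinom_term (S k) (S j) x)
               (fun i => qbinom_term k (S i) x + (- (x * cpow q k)) * qbinom_term k i x) k)
      by (intros i Hi; apply qbinom_term_S, Hi).
    rewrite sum_n_plusC, sum_n_scal_lC.
    assert (H0 : qbinom_term (S k) 0 x = qbinom_term k 0 x)
      by (unfold qbinom_term; rewrite !gauss_binom_0; reflexivity).
    assert (Hl : sum_n (fun j => qbinom_term k j x) (S k) = sum_n (fun j => qbinom_term k j x) k).
    { rewrite sum_n_SC. unfold qbinom_term at 2. rewrite gauss_binom_gt by lia. ring_C. }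
    rewrite sum_n_shift_l in Hl. rewrite H0, <- Hl. ring_C.
Qed.

End QBinomial.

Lemma qpoch_add (q : C) n k : qpoch q q (n + k) = qpoch q q n * qpoch (cpow q (S n)) q k.
Proof.
  induction k as [|k IH]; [rewrite Nat.add_0_r; simpl; ring|].
  rewrite Nat.add_succ_r. simpl qpoch. rewrite IH, cpow_add. simpl. ring.
Qed.

Definition split_exp (m : Z) (n j l : nat) : Z :=
  let n' := Z.of_nat n in let j' := Z.of_nat j in let l' := Z.of_nat l in
  (n' * n' + (m + 1) * n' + j' * j' + j' + tri l + j' * l' - n' * l')%Z.

Definition split_term (m : Z) (q : C) (n j l : nat) : C :=
  cpow (-1) l * cpowZ q (split_exp m n j l) / (cpow (qpoch q q n) 2 * qpoch q q j * qpoch q q l).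

Definition row_exp (m : Z) (n j : nat) : Z :=
  (Z.of_nat n * Z.of_nat n + (m + 1) * Z.of_nat n + Z.of_nat j * Z.of_nat j + Z.of_nat j)%Z.

(* [P] stands for [(q;q)_oo]. *)
Definition row_term (m : Z) (q P : C) (n j : nat) : C :=
  if (j <? n)%nat then 0 else
  cpowZ q (row_exp m n j) * P / (cpow (qpoch q q n) 2 * qpoch q q j * qpoch q q (j - n)).

Section InnerSum.

Variables (m : Z) (q : C).
Hypotheses (hq0 : q <> 0) (hq : Cmod q < 1).

Lemma fexp_split n j l :
  (fexp m n (j + l) + (tri j - Z.of_nat j) + Z.of_nat (S n) * Z.of_nat j = split_exp m n j l)%Z.
Proof.
  unfold fexp, split_exp. change ((Z.of_nat (j + l) * (Z.of_nat (j + l) + 1)) / 2)%Z with (tri (j + l)).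
  rewrite tri_add. assert (h := tri_double j). rewrite !Nat2Z.inj_add, Nat2Z.inj_succ. nia.
Qed.

(* [(q;q)_(n+k) = (q;q)_n (q^(n+1);q)_k], expanded by the q-binomial theorem. *)
Lemma fterm_as_sum n k : fterm m q n k = sum_n (fun j => split_term m q n j (k - j)) k.
Proof.
  assert (Q := qpoch_neq0 q hq).
  unfold fterm. rewrite qpoch_add, (qpoch_binomial q hq0 hq (cpow q (S n)) k).
  set (c := cpow (-1) k * cpowZ q (fexp m n k) * qpoch q q n / (cpow (qpoch q q n) 3 * qpoch q q k)).
  transitivity (c * sum_n (fun j => qbinom_term q k j (cpow q (S n))) k).
  { unfold c. field. split; auto. apply cpow_neq0; auto. }
  rewrite <- sum_n_scal_lC. apply sum_n_ext_loc. intros j Hj.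
  unfold c, qbinom_term, split_term, gauss_binom. destruct (Nat.leb_spec j k) as [_|h]; [|lia].
  set (l := (k - j)%nat). assert (Hk : k = (j + l)%nat) by (unfold l; lia). clearbody l. subst k.
  replace (j + l - j)%nat with l by lia.
  rewrite <- (cpowZ_nat q (S n)), cpow_cpowZ, cpow_add, <- (fexp_split n j l), !cpowZ_add by auto.
  assert (S1 := cpow_m1_sqr j).
  transitivity ((cpow (-1) j * cpow (-1) j) *
    (cpow (-1) l * (cpowZ q (fexp m n (j + l)) * cpowZ q (tri j - Z.of_nat j)
     * cpowZ q (Z.of_nat (S n) * Z.of_nat j)) /
     (qpoch q q n * (qpoch q q n * 1) * qpoch q q j * qpoch q q l))).
  - to_C. simpl cpow. field. repeat split; auto.
  - rewrite S1. simpl. ring_C.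
Qed.

Lemma split_term_euler n j l : split_term m q n j l =
  (cpowZ q (row_exp m n j) / (cpow (qpoch q q n) 2 * qpoch q q j)) * euler_term q (Z.of_nat j - Z.of_nat n) l.
Proof.
  unfold split_term, euler_term.
  replace (split_exp m n j l) with (row_exp m n j + (tri l + (Z.of_nat j - Z.of_nat n) * Z.of_nat l))%Z
    by (unfold split_exp, row_exp; ring).
  rewrite cpowZ_add by auto. assert (Q := qpoch_neq0 q hq).
  field. repeat split; auto. apply cpow_neq0; auto.
Qed.

Lemma split_exp_ge n j l :
  (Z.of_nat (j + l + j)
   - (2 * (Z.of_nat n + 1) * (Z.of_nat n + 1) - Z.of_nat n * Z.of_nat n - (m + 1) * Z.of_nat n)
   <= split_exp m n j l)%Z.
Proof.
  unfold split_exp. assert (h := tri_add_linear_ge l (- Z.of_nat n)).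
  assert (h2 : (Z.of_nat j <= Z.of_nat j * Z.of_nat j)%Z) by nia.
  assert (h3 : (0 <= Z.of_nat j * Z.of_nat l)%Z) by nia.
  rewrite !Nat2Z.inj_add. nia.
Qed.

Lemma row_term_euler P n j : is_qpoch_inf q P ->
  is_series (fun l => split_term m q n j l) (row_term m q P n j).
Proof.
  intros HP. assert (Q := qpoch_neq0 q hq).
  assert (He := is_series_euler q hq0 hq P (Z.of_nat j - Z.of_nat n) HP).
  set (c := cpowZ q (row_exp m n j) / (cpow (qpoch q q n) 2 * qpoch q q j)).
  apply (is_series_scal (K := C_AbsRing) (V := C_NormedModule) c) in He.
  eapply is_series_ext; [intro l; symmetry; apply split_term_euler|].
  replace (row_term m q P n j) with (scal c (if (Z.of_nat j - Z.of_nat n <? 0)%Z then RtoC 0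
       else P / qpoch q q (Z.to_nat (Z.of_nat j - Z.of_nat n)))); [exact He|].
  unfold row_term, c. destruct (Nat.ltb_spec j n); destruct (Z.ltb_spec (Z.of_nat j - Z.of_nat n) 0); try lia.
  - change (c * 0 = 0). ring.
  - replace (Z.to_nat (Z.of_nat j - Z.of_nat n)) with (j - n)%nat by lia.
    change ((cpowZ q (row_exp m n j) / (cpow (qpoch q q n) 2 * qpoch q q j)) * (P / qpoch q q (j - n)) =
            cpowZ q (row_exp m n j) * P / (cpow (qpoch q q n) 2 * qpoch q q j * qpoch q q (j - n))).
    field. repeat split; auto. apply cpow_neq0; auto.
Qed.

(* Summing the pieces [split_term m q n j (k - j)] first over [j <= k], then over [j]
   with [k - j] fixed, is justified by geometric domination. *)
Lemma is_series_fterm_row P n : is_qpoch_inf q P ->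
  exists S, is_series (fterm m q n) S /\ is_series (row_term m q P n) S.
Proof.
  intros HP.
  set (D := (2 * (Z.of_nat n + 1) * (Z.of_nat n + 1) - Z.of_nat n * Z.of_nat n - (m + 1) * Z.of_nat n)%Z).
  set (r := Cmod q). assert (Hr : 0 < r <= 1) by (split; [apply Cmod_gt_0; auto|unfold r; lra]).
  set (v := fun k j => if (j <=? k)%nat then split_term m q n j (k - j) else 0).
  apply (is_series_swap (qpoch_inv_bound q ^ 4 * powerRZ r (- D)) r) with (u := v).
  - unfold r; split; [apply Cmod_ge_0|lra].
  - intros k j. assert (0 < qpoch_inv_bound q ^ 4)%R by (apply pow_lt, qpoch_inv_bound_gt0).
    assert (0 < powerRZ r (- D))%R by (apply powerRZ_lt; lra).
    assert (0 <= r ^ k)%R by (apply pow_le; lra). assert (0 <= r ^ j)%R by (apply pow_le; lra).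
    unfold v. destruct (Nat.leb_spec j k) as [h|h].
    + unfold split_term. eapply Rle_trans; [apply Cmod_div_qpoch4_le; auto|].
      rewrite Cmod_mult, Cmod_cpow_m1, Cmod_cpowZ by auto. fold r.
      set (l := (k - j)%nat). assert (Hk : k = (j + l)%nat) by (unfold l; lia). clearbody l. subst k.
      assert (Hb : (powerRZ r (split_exp m n j l) <= powerRZ r (- D) * r ^ (j + l + j))%R)
        by (apply powerRZ_le_geom; auto; apply split_exp_ge).
      rewrite pow_add in Hb. nra.
    + rewrite Cmod_0. apply Rmult_le_pos; [apply Rmult_le_pos; [apply Rmult_le_pos|]|]; lra.
  - intro k. replace (fterm m q n k) with (sum_n (v k) k).
    + apply is_series_C_finite. intros j Hj. unfold v. destruct (Nat.leb_spec j k); [lia|reflexivity].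
    + rewrite fterm_as_sum. apply sum_n_ext_loc. intros j Hj. unfold v.
      destruct (Nat.leb_spec j k); [reflexivity|lia].
  - intro j. apply (is_series_C_leading_zeros _ j).
    + intros k Hk. unfold v. destruct (Nat.leb_spec j k); [lia|reflexivity].
    + eapply is_series_ext; [|apply (row_term_euler P n j HP)].
      intro l. unfold v. destruct (Nat.leb_spec j (j + l)); [|lia]. f_equal. lia.
Qed.

End InnerSum.

(** * The finite sums [B_a(j)] *)

Lemma sum_n_S_split (f g F : nat -> C) j :
  (forall n, (n <= S j)%nat ->
     F n = (if (n <=? j)%nat then f n else 0) + match n with O => 0 | S p => g p end) ->
  sum_n F (S j) = sum_n f j + sum_n g j.
Proof.
  intros H. rewrite (sum_n_ext_loc F _ (S j) H), sum_n_plusC, sum_n_SC, sum_n_shift_l.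
  destruct (Nat.leb_spec (S j) j); [lia|].
  replace (sum_n f j + sum_n g j) with (sum_n f j + RtoC 0 + (RtoC 0 + sum_n g j)) by ring_C.
  do 2 f_equal. apply sum_n_ext_loc. intros n Hn. destruct (Nat.leb_spec n j); [reflexivity|lia].
Qed.

Section FiniteSums.

Variable q : C.
Hypotheses (hq0 : q <> 0) (hq : Cmod q < 1).

Definition chu_term (t j n : nat) : C :=
  cpowZ q (Z.of_nat n * Z.of_nat n + Z.of_nat t * Z.of_nat n) /
  (qpoch q q n * qpoch q q (t + n) * qpoch q q (j - n)).

Lemma sum_chu_term_S t j :
  (1 - cpow q (S j)) * sum_n (chu_term t (S j)) (S j) =
  sum_n (chu_term t j) j + cpow q (t + S j) * sum_n (chu_term (S t) j) j.
Proof.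
  assert (Q := qpoch_neq0 q hq). assert (F := one_sub_qpow_neq0 q hq).
  rewrite <- !sum_n_scal_lC. apply sum_n_S_split. intros n Hn.
  destruct (Nat.leb_spec n j) as [h|h].
  - destruct n as [|p].
    + unfold chu_term. simpl. rewrite Nat.add_0_r, Nat.sub_0_r. field. repeat split; auto.
    + set (d := (j - S p)%nat). assert (Hj : j = (S p + d)%nat) by (unfold d; lia). clearbody d. subst j.
      unfold chu_term.
      replace (S (S p + d) - S p)%nat with (S d) by lia. replace (S p + d - S p)%nat with d by lia.
      replace (S p + d - p)%nat with (S d) by lia. replace (S t + p)%nat with (t + S p)%nat by lia.
      replace (Z.of_nat p * Z.of_nat p + Z.of_nat (S t) * Z.of_nat p)%Z with
        ((Z.of_nat (S p) * Z.of_nat (S p) + Z.of_nat t * Z.of_nat (S p)) + Z.of_nat (S d)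
         + - Z.of_nat (t + S (S p + d)))%Z by lia.
      rewrite !cpowZ_add, cpowZ_opp, !cpowZ_nat by auto.
      assert (Cnz := cpow_neq0 q (t + S (S p + d)) hq0).
      replace (cpow q (S (S p + d))) with (cpow q (S d) * cpow q (S p)) by (rewrite <- cpow_add; f_equal; lia).
      simpl qpoch. simpl cpow. field. repeat split; auto.
  - replace n with (S j) by lia. unfold chu_term.
    rewrite Nat.sub_diag. replace (S t + j)%nat with (t + S j)%nat by lia.
    replace (Z.of_nat j * Z.of_nat j + Z.of_nat (S t) * Z.of_nat j)%Z
      with ((Z.of_nat (S j) * Z.of_nat (S j) + Z.of_nat t * Z.of_nat (S j)) + - Z.of_nat (t + S j))%Z by lia.
    rewrite !cpowZ_add, cpowZ_opp, !cpowZ_nat by auto.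
    assert (Cnz := cpow_neq0 q (t + S j) hq0).
    replace (j - j)%nat with 0%nat by lia.
    simpl qpoch. change (cpow q (S j)) with (q * cpow q j). field. repeat split; auto.
Qed.

Lemma sum_chu_term j t : sum_n (chu_term t j) j = / (qpoch q q j * qpoch q q (t + j)).
Proof.
  assert (Q := qpoch_neq0 q hq). assert (F := one_sub_qpow_neq0 q hq).
  revert t. induction j as [|j IH]; intro t.
  - rewrite sum_O. unfold chu_term. simpl. rewrite Z.mul_0_r, Nat.add_0_r. simpl. field. auto.
  - assert (R := sum_chu_term_S t j). rewrite !IH in R.
    apply (Cmult_reg_l (1 - cpow q (S j))); [apply F|]. rewrite R.
    replace (t + S j)%nat with (S (t + j)) by lia. replace (S t + j)%nat with (S (t + j)) by lia.
    change (cpow q (S (t + j))) with (q * cpow q (t + j)).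
    simpl qpoch. simpl cpow. field. repeat split; auto.
Qed.

Definition bsum_term (a : Z) (j n : nat) : C :=
  cpowZ q (Z.of_nat n * Z.of_nat n + a * Z.of_nat n) / (cpow (qpoch q q n) 2 * qpoch q q (j - n)).

Definition bsum (a : Z) (j : nat) : C := sum_n (bsum_term a j) j.

Lemma bsum_0 j : bsum 0 j = / (qpoch q q j * qpoch q q j).
Proof.
  unfold bsum. transitivity (sum_n (chu_term 0 j) j); [|apply sum_chu_term].
  apply sum_n_ext_loc. intros n Hn.
  unfold bsum_term, chu_term. simpl. rewrite Cmult_1_r. reflexivity.
Qed.

Lemma bsum_S a j : bsum a (S j) = bsum a j + cpow q (S j) * bsum (a - 1) (S j).
Proof.
  assert (Q := qpoch_neq0 q hq). assert (F := one_sub_qpow_neq0 q hq).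
  unfold bsum. rewrite <- sum_n_scal_lC.
  transitivity (sum_n (fun n => (if (n <=? j)%nat then bsum_term a j n else 0)
                               + cpow q (S j) * bsum_term (a - 1) (S j) n) (S j)).
  - apply sum_n_ext_loc. intros n Hn. destruct (Nat.leb_spec n j) as [h|h].
    + set (d := (j - n)%nat). assert (Hj : j = (n + d)%nat) by (unfold d; lia). clearbody d. subst j.
      unfold bsum_term. replace (S (n + d) - n)%nat with (S d) by lia. replace (n + d - n)%nat with d by lia.
      replace (Z.of_nat n * Z.of_nat n + (a - 1) * Z.of_nat n)%Z with
        ((Z.of_nat n * Z.of_nat n + a * Z.of_nat n) + Z.of_nat (S d) + - Z.of_nat (S (n + d)))%Z by lia.
      rewrite !cpowZ_add, cpowZ_opp, !cpowZ_nat by auto.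
      assert (Cnz := cpow_neq0 q (S (n + d)) hq0).
      assert (Cnz2 : cpowZ q (Z.of_nat n * Z.of_nat n) <> 0) by (apply cpowZ_neq0; auto).
      simpl qpoch. change (cpow q (S d)) with (q * cpow q d).
      to_C. field. repeat split; auto. apply cpow_neq0; auto.
    + replace n with (S j) by lia. unfold bsum_term. rewrite Nat.sub_diag.
      replace (Z.of_nat (S j) * Z.of_nat (S j) + (a - 1) * Z.of_nat (S j))%Z with
        ((Z.of_nat (S j) * Z.of_nat (S j) + a * Z.of_nat (S j)) + - Z.of_nat (S j))%Z by lia.
      rewrite !cpowZ_add, cpowZ_opp, !cpowZ_nat by auto.
      assert (Cnz := cpow_neq0 q (S j) hq0).
      simpl qpoch. to_C. field. repeat split; auto. apply cpow_neq0; auto. apply Cmult_neq_0; auto.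
  - etransitivity; [apply sum_n_plusC|]. f_equal.
    rewrite sum_n_SC. destruct (Nat.leb_spec (S j) j); [lia|].
    transitivity (sum_n (bsum_term a j) j + RtoC 0); [|ring_C]. f_equal.
    apply sum_n_ext_loc. intros n Hn. destruct (Nat.leb_spec n j); [reflexivity|lia].
Qed.

Lemma bsum_m1 j : bsum (-1) j = (2 - cpow q j) / (qpoch q q j * qpoch q q j).
Proof.
  assert (Q := qpoch_neq0 q hq). assert (F := one_sub_qpow_neq0 q hq).
  destruct j as [|j].
  - unfold bsum, bsum_term. rewrite sum_O. simpl. field.
  - assert (E := bsum_S 0 j). change (0 - 1)%Z with (-1)%Z in E. rewrite !bsum_0 in E.
    assert (Cnz := cpow_neq0 q (S j) hq0).
    apply (Cmult_reg_l (cpow q (S j))); auto.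
    transitivity (/ (qpoch q q (S j) * qpoch q q (S j)) - / (qpoch q q j * qpoch q q j)).
    + rewrite E. ring_C.
    + simpl qpoch. simpl cpow. simpl cpow in Cnz. field. repeat split; auto.
Qed.

Lemma bsum_m2 j : bsum (-2) j =
  ((3 + / q) - (2 + 2 * / q) * cpow q j + cpowZ q (2 * Z.of_nat j - 1)) / (qpoch q q j * qpoch q q j).
Proof.
  assert (Q := qpoch_neq0 q hq). assert (F := one_sub_qpow_neq0 q hq).
  destruct j as [|j].
  - unfold bsum, bsum_term. rewrite sum_O. simpl. field. auto.
  - assert (E := bsum_S (-1) j). change (-1 - 1)%Z with (-2)%Z in E. rewrite !bsum_m1 in E.
    assert (Cnz := cpow_neq0 q (S j) hq0).
    apply (Cmult_reg_l (cpow q (S j))); auto.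
    replace (2 * Z.of_nat (S j) - 1)%Z with (Z.of_nat (S (j + j))) by lia. rewrite cpowZ_nat.
    transitivity ((2 - cpow q (S j)) / (qpoch q q (S j) * qpoch q q (S j))
                  - (2 - cpow q j) / (qpoch q q j * qpoch q q j)).
    + rewrite E. ring_C.
    + simpl qpoch. simpl cpow. rewrite (cpow_add q j j). simpl cpow in Cnz. field. repeat split; auto.
Qed.

End FiniteSums.

Section OuterSum.

Variables (m : Z) (q P : C).
Hypotheses (hq0 : q <> 0) (hq : Cmod q < 1) (hP : is_qpoch_inf q P).

Lemma sum_row_term j : sum_n (fun n => row_term m q P n j) j =
  P * (cpowZ q (Z.of_nat j * Z.of_nat j + Z.of_nat j) / qpoch q q j) * bsum q (m + 1) j.
Proof.
  unfold bsum. rewrite <- sum_n_scal_lC. apply sum_n_ext_loc. intros n Hn.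
  unfold row_term, bsum_term, row_exp. destruct (Nat.ltb_spec j n); [lia|].
  replace (Z.of_nat n * Z.of_nat n + (m + 1) * Z.of_nat n + Z.of_nat j * Z.of_nat j + Z.of_nat j)%Z
    with ((Z.of_nat j * Z.of_nat j + Z.of_nat j) + (Z.of_nat n * Z.of_nat n + (m + 1) * Z.of_nat n))%Z by lia.
  rewrite cpowZ_add by auto. assert (Q := qpoch_neq0 q hq).
  to_C. field. repeat split; auto. apply cpow_neq0; auto.
Qed.

Lemma row_term_dominated :
  geom_dominated (Cmod P * qpoch_inv_bound q ^ 4 * powerRZ (Cmod q) (- (m * m))) (Cmod q) (row_term m q P).
Proof.
  set (r := Cmod q). assert (Hr : 0 < r <= 1) by (split; [apply Cmod_gt_0; auto|unfold r; lra]).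
  intros n j. assert (0 < qpoch_inv_bound q ^ 4)%R by (apply pow_lt, qpoch_inv_bound_gt0).
  assert (0 < powerRZ r (- (m * m)))%R by (apply powerRZ_lt; lra).
  assert (0 <= r ^ n)%R by (apply pow_le; lra). assert (0 <= r ^ j)%R by (apply pow_le; lra).
  assert (0 <= Cmod P) by apply Cmod_ge_0.
  unfold row_term. destruct (Nat.ltb_spec j n).
  - rewrite Cmod_0. apply Rmult_le_pos; [apply Rmult_le_pos; [apply Rmult_le_pos|]|]; try lra.
    apply Rmult_le_pos; lra.
  - eapply Rle_trans; [apply Cmod_div_qpoch4_le; auto|].
    rewrite Cmod_mult, Cmod_cpowZ by auto. fold r.
    assert (Hb : (powerRZ r (row_exp m n j) <= powerRZ r (- (m * m)) * r ^ (n + j))%R).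
    { apply powerRZ_le_geom; auto. unfold row_exp. rewrite Nat2Z.inj_add.
      assert (h1 := Z.square_nonneg (2 * Z.of_nat n + m)). assert (h2 := Z.square_nonneg m).
      assert (h3 := Z.square_nonneg (Z.of_nat j)). nia. }
    rewrite pow_add in Hb. assert (0 <= powerRZ r (row_exp m n j))%R by (apply powerRZ_le; lra).
    replace (Cmod P * qpoch_inv_bound q ^ 4 * powerRZ r (- (m * m)) * r ^ n * r ^ j)%R
      with (Cmod P * qpoch_inv_bound q ^ 4 * (powerRZ r (- (m * m)) * (r ^ n * r ^ j)))%R by ring.
    replace (powerRZ r (row_exp m n j) * Cmod P * qpoch_inv_bound q ^ 4)%R
      with (Cmod P * qpoch_inv_bound q ^ 4 * powerRZ r (row_exp m n j))%R by ring.
    apply Rmult_le_compat_l; [apply Rmult_le_pos|]; lra.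
Qed.

(* Each row of [f_m] is the sum of [row_term m q P n]; exchanging the order of the double
   sum of [row_term] collects, for each [j], the finite sum [bsum q (m + 1) j]. *)
Theorem is_f_of_bsum (c : nat -> C) :
  (forall j, bsum q (m + 1) j = c j / (qpoch q q j * qpoch q q j)) ->
  exists S, is_series (fun j => c j * bterm q j) S /\ is_f m q (P * S).
Proof.
  intros Hc.
  assert (Hrow : forall n, exists S, is_series (fterm m q n) S /\ is_series (row_term m q P n) S)
    by (intro n; apply is_series_fterm_row; auto).
  set (g := fun n => proj1_sig (constructive_indefinite_description _ (Hrow n))).
  assert (Hg : forall n, is_series (fterm m q n) (g n) /\ is_series (row_term m q P n) (g n))
    by (intro n; exact (proj2_sig (constructive_indefinite_description _ (Hrow n)))).
  destruct (is_series_swap _ (Cmod q) (conj (Cmod_ge_0 q) hq) (row_term m q P) g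
              (fun j => sum_n (fun n => row_term m q P n j) j) row_term_dominated)
    as [S0 [HS1 HS2]].
  - intro n. apply Hg.
  - intro j. apply is_series_C_finite. intros n Hn.
    unfold row_term. destruct (Nat.ltb_spec j n); [reflexivity|lia].
  - assert (HPnz := is_qpoch_inf_neq0 q hq P hP).
    exists (S0 / P). split.
    + apply (is_series_scal (K := C_AbsRing) (V := C_NormedModule) (/ P)) in HS2.
      replace (S0 / P) with (scal (/ P) S0) by (change (/ P * S0 = S0 / P); field; auto).
      eapply is_series_ext; [|exact HS2].
      intro j. change (/ P * sum_n (fun n => row_term m q P n j) j = c j * bterm q j).
      rewrite sum_row_term, Hc. unfold bterm.
      replace (Z.of_nat j * Z.of_nat j + Z.of_nat j)%Z with (Z.of_nat (j * (j + 1))) by lia.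
      rewrite cpowZ_nat. assert (Q := qpoch_neq0 q hq j).
      simpl cpow. field. repeat split; auto.
    + exists g. split; [intro n; apply Hg|].
      assert (E : P * (S0 / P) = S0 :> C) by (field; auto). rewrite E. exact HS1.
Qed.

End OuterSum.

(** * The degenerate case [q = 0] *)

Lemma qpoch_0 n : qpoch 0 0 n = 1.
Proof. induction n as [|n IH]; simpl; [reflexivity|rewrite IH; ring]. Qed.

Lemma cpowZ_0_pos z : (0 < z)%Z -> cpowZ 0 z = 0.
Proof.
  intros H. destruct z as [|p|p]; try lia. simpl.
  destruct (Pos2Nat.is_succ p) as [k ->]. simpl. ring.
Qed.

Lemma is_qpoch_inf_0 : is_qpoch_inf 0 1.
Proof.
  apply filterlim_C_eps. intro eps. exists 0%nat. intros n _.
  rewrite qpoch_0. replace (1 - 1) with (RtoC 0) by ring. rewrite Cmod_0. apply cond_pos.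
Qed.

Lemma is_series_bterm_0 (c : nat -> C) : is_series (fun n => c n * bterm 0 n) (c 0%nat).
Proof.
  replace (c 0%nat) with (sum_n (fun n => c n * bterm 0 n) 0).
  - apply is_series_C_finite. intros [|n] Hn; [lia|]. unfold bterm. simpl. unfold Cdiv. ring.
  - rewrite sum_O. unfold bterm. simpl. field.
Qed.

(* At [q = 0] only the terms with exponent [fexp m n k = 0] survive, all with [n, k <= 1]. *)
Lemma is_f_0 m : (m = -1 \/ m = -2)%Z -> is_f m 0 1.
Proof.
  intros Hm.
  assert (Hterm : forall n k, fterm m 0 n k = cpow (-1) k * cpowZ 0 (fexp m n k))
    by (intros n k; unfold fterm; rewrite !qpoch_0; simpl; field).
  assert (Hpos : forall n k, (2 <= k)%nat \/ (2 <= n)%nat -> (0 < fexp m n k)%Z).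
  { intros n k H. unfold fexp. change ((Z.of_nat k * (Z.of_nat k + 1)) / 2)%Z with (tri k).
    assert (h := tri_double k).
    assert (h1 := Z.square_nonneg (Z.of_nat n - Z.of_nat k)). assert (h2 := Z.square_nonneg (Z.of_nat n - 1)).
    destruct Hm; subst m; destruct H; nia. }
  exists (fun n => sum_n (fterm m 0 n) 1). split.
  - intro n. apply is_series_C_finite. intros k Hk. rewrite Hterm, cpowZ_0_pos by (apply Hpos; lia). ring.
  - replace (RtoC 1) with (sum_n (fun n => sum_n (fterm m 0 n) 1) 1).
    + apply is_series_C_finite. intros n Hn.
      rewrite sum_n_SC, sum_O, !Hterm, !cpowZ_0_pos by (apply Hpos; lia). ring_C.
    + rewrite sum_n_SC, sum_O, !sum_n_SC, !sum_O, !Hterm.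
      destruct Hm; subst m; unfold fexp; simpl; rewrite ?(cpowZ_0_pos 1) by lia; simpl; ring_C.
Qed.

Theorem mainTheorem8 (q : C) (hq : Cmod q < 1) :
  (exists P S : C, is_qpoch_inf q P /\
     is_series (fun n => bterm q n) S /\
     is_f (-1)%Z q (P * S))
  /\
  (exists P S : C, is_qpoch_inf q P /\
     is_series (fun n => (2 - cpow q n) * bterm q n) S /\
     is_f (-2)%Z q (P * S))
  /\
  (q <> 0 ->
   exists P S : C, is_qpoch_inf q P /\
     is_series (fun n =>
        ((3 + / q) - (2 + 2 * / q) * cpow q n + cpowZ q (2 * Z.of_nat n - 1))
        * bterm q n) S /\
     is_f (-3)%Z q (P * S)).
Proof.
  destruct (is_qpoch_inf_exists q hq) as [P HP].
  assert (Hgen : forall m c, q <> 0 -> (forall j, bsum q (m + 1) j = c j / (qpoch q q j * qpoch q q j)) ->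
            exists P S, is_qpoch_inf q P /\ is_series (fun n => c n * bterm q n) S /\ is_f m q (P * S)).
  { intros m c Hq0 Hc. destruct (is_f_of_bsum m q P Hq0 hq HP c Hc) as [S HS]. exists P, S. auto. }
  assert (H3 : q <> 0 -> _) by (intros Hq0; exact (Hgen (-3)%Z _ Hq0 (bsum_m2 q Hq0 hq))).
  destruct (Ceq_dec q 0) as [->|Hq0].
  - assert (E : forall c : nat -> C, c 0%nat = 1 -> is_series (fun n => c n * bterm 0 n) (RtoC 1))
      by (intros c Hc; rewrite <- Hc; apply is_series_bterm_0).
    split; [|split; [|exact H3]]; exists 1, 1;
      (split; [apply is_qpoch_inf_0|split; [|rewrite Cmult_1_l; apply is_f_0; lia]]).
    + eapply is_series_ext; [|apply (E (fun _ => 1) eq_refl)]. intro; simpl. ring.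
    + apply E. simpl. ring.
  - split; [|split; [|exact H3]].
    + destruct (Hgen (-1)%Z (fun _ => 1) Hq0) as [P' [S [HP' [HS Hf]]]].
      { intro j. rewrite bsum_0 by auto. field. apply qpoch_neq0; auto. }
      exists P', S. split; [exact HP'|split; [|exact Hf]].
      eapply is_series_ext; [|exact HS]. intro n; simpl. ring.
    + exact (Hgen (-2)%Z _ Hq0 (bsum_m1 q Hq0 hq)).
Qed.
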